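(* Let $G$ be an $n$-player stage game (mixed strategies allowed). If there exist a positive integer $T$ and an SPE of $G(T)$ in which locally suboptimal behavior occurs, then there exists a strategy profile $\hat\sigma=(\hat\sigma_1,\dots,\hat\sigma_n)\in\prod_i\Delta A_i$ with $I(G)\subseteq B(\hat\sigma)$ and $B(\hat\sigma)\ne[n]$.
   Context: An $n$-player stage game $G$ has finite nonempty action sets $A_1,\dots,A_n$ and payoffs $u_i:A_1\times\dots\times A_n\to\mathbb{R}$, extended to mixed profiles by expectation. $\mathrm{Nash}(G)$ is the set of mixed Nash equilibria of $G$, $V_i=\{u_i(\sigma):\sigma\in\mathrm{Nash}(G)\}$, $[n]=\{1,\dots,n\}$, $I(G)=\{i:|V_i|=1\}$, and for a profile $\sigma$, $B(\sigma)=\{i:\sigma_i$ is a best response to $\sigma_{-i}\}$. $G(T)$ is the $T$-round repetition of $G$ with realized action profiles observed after each round and payoff equal to the expected sum of stage payoffs; a strategy of player $i$ is a map $\mu_i$ from histories $\bigcup_{k=0}^{T-1}(A_1\times\dots\times A_n)^k$ to $\Delta A_i$. A profile $\mu$ is an SPE if for every $0\le k<T$ and history $h$ of length $k$, the continuation $\mu_{|h}$ is a Nash equilibrium of $G(T-k)$. Locally suboptimal behavior occurs in an SPE $\mu$ if for some history $h$ of length $k<T$, $(\mu_1(h),\dots,\mu_n(h))\notin\mathrm{Nash}(G)$. *)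

From HB Require Import structures.
From mathcomp Require Import all_boot all_order all_algebra.
From mathcomp Require Import reals.
Set Implicit Arguments. Unset Strict Implicit. Unset Printing Implicit Defensive.
Import Order.TTheory GRing.Theory Num.Theory.
Local Open Scope ring_scope.

Section StageGame.
Variables (R : realType) (n : nat) (A : 'I_n -> finType).

Definition prof := {dffun forall j : 'I_n, A j}.
Definition mprof := forall j : 'I_n, {ffun A j -> R}.

Definition is_mixed (j : 'I_n) (s : {ffun A j -> R}) : Prop :=
  (forall a, 0 <= s a) /\ \sum_(a : A j) s a = 1.

Definition is_mixed_profile (sigma : mprof) : Prop :=
  forall j, is_mixed (sigma j).

Definition prob_prof (sigma : mprof) (a : prof) : R :=
  \prod_(j < n) sigma j (a j).

Variable u : 'I_n -> prof -> R.

Definition exp_pay (i : 'I_n) (sigma : mprof) : R :=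
  \sum_(a : prof) prob_prof sigma a * u i a.

Definition best_response (sigma : mprof) (i : 'I_n) : Prop :=
  forall tau : {ffun A i -> R}, is_mixed tau ->
    exp_pay i (dfwith sigma tau) <= exp_pay i sigma.

Definition Nash (sigma : mprof) : Prop :=
  is_mixed_profile sigma /\ forall i, best_response sigma i.

Definition Vset (i : 'I_n) (x : R) : Prop :=
  exists sigma, Nash sigma /\ exp_pay i sigma = x.

(* i \in I(G)  iff  |V_i| = 1 *)
Definition in_IG (i : 'I_n) : Prop :=
  exists v, forall x, Vset i x <-> x = v.

(* histories are sequences of realized pure profiles; a strategy profile
   maps each history to a mixed profile (player i's strategy is h |-> mu h i) *)
Definition sprof := seq prof -> mprof.

Definition is_strategy (T : nat) (i : 'I_n) (s : seq prof -> {ffun A i -> R}) :=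
  forall h : seq prof, (size h < T)%N -> is_mixed (s h).

Definition is_strat_prof (T : nat) (mu : sprof) : Prop :=
  forall h : seq prof, (size h < T)%N -> is_mixed_profile (mu h).

Fixpoint cont_pay (i : 'I_n) (k : nat) (mu : sprof) (h : seq prof) : R :=
  match k with
  | 0 => 0
  | k'.+1 => \sum_(a : prof) prob_prof (mu h) a * (u i a + cont_pay i k' mu (rcons h a))
  end.

Definition rep_pay (i : 'I_n) (T : nat) (mu : sprof) : R := cont_pay i T mu [::].

Definition deviate (mu : sprof) (i : 'I_n) (s : seq prof -> {ffun A i -> R}) : sprof :=
  fun h => dfwith (mu h) (s h).

Definition continuation (mu : sprof) (h : seq prof) : sprof :=
  fun h' => mu (h ++ h').

Definition rep_Nash (T : nat) (mu : sprof) : Prop :=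
  is_strat_prof T mu /\
  forall i (s : seq prof -> {ffun A i -> R}), is_strategy T s ->
    rep_pay i T (deviate mu s) <= rep_pay i T mu.

Definition SPE (T : nat) (mu : sprof) : Prop :=
  is_strat_prof T mu /\
  forall h : seq prof, (size h < T)%N -> rep_Nash (T - size h) (continuation mu h).

Definition locally_suboptimal (T : nat) (mu : sprof) : Prop :=
  exists h : seq prof, (size h < T)%N /\ ~ Nash (mu h).

End StageGame.

From mathcomp Require Import all_boot all_order all_algebra.
From mathcomp Require Import reals.
From mathcomp Require Import zify.
From Stdlib Require Import Classical FunctionalExtensionality.
Import GRing.Theory Num.Theory.
Local Open Scope ring_scope.

(* Take an SPE mu of G(T) and a history h at which the
   prescribed profile mu h is not a stage Nash equilibrium.  Among all such
   histories choose one, h0, of maximal length: after h0 every prescribed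
   profile is a stage Nash equilibrium.  A player i in I(G) receives the same
   stage payoff v_i in every Nash equilibrium, so from any history strictly
   longer than h0 her expected continuation payoff over m rounds is m * v_i,
   whatever happened before.  Hence a one-shot deviation of i at h0 followed
   by obedience changes only her stage payoff at h0; since mu restricted to
   h0 is a Nash equilibrium of the remaining game, the deviation does not pay,
   i.e. i best-responds in mu h0.  Then sigma_hat := mu h0 works: it is mixed,
   every player of I(G) best-responds, and, not being Nash, some player does
   not. *)

Section RepeatedGame.
Set Implicit Arguments. Unset Strict Implicit.
Variables (R : realType) (n : nat) (A : 'I_n -> finType).
Variable u : 'I_n -> prof A -> R.

Lemma sum_prod_dffun (F : forall j : 'I_n, {ffun A j -> R}) :
  \sum_(a : prof A) \prod_(j < n) F j (a j) = \prod_(j < n) \sum_(x : A j) F j x.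
Proof.
transitivity (\prod_(j < n) \sum_(t in tagged_with A j) untag 0 (F j) t); last first.
  by apply: eq_bigr => j _; rewrite (big_tag (fun i => F i)).
rewrite bigA_distr_big_dep -(@big_fprod R 0 1 *%R +%R _ A F).
rewrite (reindex (@fprod_of_dffun _ A)) /=; last exact/onW_bij/fprod_of_dffun_bij.
by apply: eq_bigr => a _; apply: eq_bigr => j _; rewrite /fprod_of_dffun fprodE.
Qed.

Lemma sum_prob_prof (sigma : mprof R A) :
  is_mixed_profile sigma -> \sum_(a : prof A) prob_prof sigma a = 1.
Proof.
by move=> Hsigma; rewrite /prob_prof sum_prod_dffun; apply: big1 => j _; case: (Hsigma j).
Qed.

Lemma exp_pay_addr i (sigma : mprof R A) (c : R) :
  is_mixed_profile sigma ->
  \sum_(a : prof A) prob_prof sigma a * (u i a + c) = exp_pay u i sigma + c.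
Proof.
move=> Hsigma; under eq_bigr do rewrite mulrDr.
by rewrite big_split /= -mulr_suml sum_prob_prof // mul1r.
Qed.

Lemma mixed_dfwith (sigma : mprof R A) i (tau : {ffun A i -> R}) :
  is_mixed_profile sigma -> is_mixed tau -> is_mixed_profile (dfwith sigma tau).
Proof. by move=> Hs Ht j; case: (eqVneq i j) => [<-|ne]; rewrite ?dfwith_in ?dfwith_out. Qed.

Lemma dfwith_self (sigma : mprof R A) i : dfwith sigma (sigma i) = sigma.
Proof.
apply: functional_extensionality_dep => j.
by case: (eqVneq i j) => [<-|ne]; rewrite ?dfwith_in ?dfwith_out.
Qed.

Lemma cont_pay_continuation i m (mu : sprof R A) h h' :
  cont_pay u i m (continuation mu h) h' = cont_pay u i m mu (h ++ h').
Proof. by elim: m h' => //= m IH h'; apply: eq_bigr => a _; rewrite IH rcons_cat. Qed.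

Lemma cont_pay_congr i m (mu1 mu2 : sprof R A) h0 :
  (forall h, mu1 (h0 ++ h) = mu2 (h0 ++ h)) ->
  cont_pay u i m mu1 h0 = cont_pay u i m mu2 h0.
Proof.
elim: m h0 => //= m IH h0 E.
have := E [::]; rewrite cats0 => ->.
apply: eq_bigr => a _; congr (_ * (_ + _)); apply: IH => h.
by rewrite cat_rcons E.
Qed.

Lemma cont_pay_Nash_tail (mu : sprof R A) T k j (v : R) :
  (forall h, (k < size h)%N -> (size h < T)%N -> Nash u (mu h)) ->
  (forall sigma, Nash u sigma -> exp_pay u j sigma = v) ->
  forall m h, (k < size h)%N -> (size h + m <= T)%N ->
  cont_pay u j m mu h = m%:R * v.
Proof.
move=> HNash Hv; elim => [|m IH] h Hk HT /=; first by rewrite mul0r.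
have Nh : Nash u (mu h) by apply: HNash => //; lia.
have Hnext a : cont_pay u j m mu (rcons h a) = m%:R * v.
  by apply: IH; rewrite size_rcons; lia.
under eq_bigr do rewrite Hnext.
rewrite exp_pay_addr; last exact: Nh.1.
by rewrite (Hv _ Nh) -natr1 mulrDl mul1r addrC.
Qed.

Lemma best_response_before_Nash_tail (mu : sprof R A) T h j :
  SPE u T mu -> (size h < T)%N ->
  (forall h', (size h < size h')%N -> (size h' < T)%N -> Nash u (mu h')) ->
  in_IG u j -> best_response u (mu h) j.
Proof.
move=> [Hstrat Hsub] Hh HNash [v Hv'] tau Htau.
have Hv : forall sigma, Nash u sigma -> exp_pay u j sigma = v.
  by move=> sigma Ns; apply/Hv'; exists sigma.
have [m Em] : exists m, (T - size h)%N = m.+1 by exists (T - size h).-1; lia.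
(* play tau at h, then follow mu *)
pose s : seq (prof A) -> {ffun A j -> R} :=
  fun h' => if h' is [::] then tau else mu (h ++ h') j.
have Hs : is_strategy (T - size h) s.
  move=> [|a h'] Hh' //=; apply: (Hstrat (h ++ a :: h')).
  by move: Hh'; rewrite size_cat /=; lia.
have Htail a : cont_pay u j m mu (rcons h a) = m%:R * v.
  by apply: (cont_pay_Nash_tail HNash Hv); rewrite size_rcons; lia.
have Hdev a : cont_pay u j m (deviate (continuation mu h) s) [:: a] = m%:R * v.
  rewrite (@cont_pay_congr _ _ _ (continuation mu h)).
    by rewrite cont_pay_continuation cats1 Htail.
  by move=> h' /=; rewrite /deviate /= dfwith_self.
have Hobey a : cont_pay u j m (continuation mu h) [:: a] = m%:R * v.
  by rewrite cont_pay_continuation cats1 Htail.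
have := (Hsub h Hh).2 j s Hs; rewrite /rep_pay Em /=.
under eq_bigr do rewrite Hdev.
under [X in _ <= X]eq_bigr do rewrite Hobey.
have Mh := Hstrat h Hh.
rewrite /deviate /continuation /= cats0.
rewrite exp_pay_addr; last exact: (mixed_dfwith Mh Htau).
rewrite exp_pay_addr; last exact: Mh.
by rewrite lerD2r.
Qed.

Lemma latest_non_Nash (mu : sprof R A) T h :
  (size h < T)%N -> ~ Nash u (mu h) ->
  exists h0, [/\ (size h0 < T)%N, ~ Nash u (mu h0) &
    forall h', (size h0 < size h')%N -> (size h' < T)%N -> Nash u (mu h')].
Proof.
move: {2}(T - size h)%N (leqnn (T - size h)) => d.
elim: d h => [|d IH] h Hd Hh HN; first lia.
have [[h' [Hlong Hh' HN']]|Hnone] :=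
  classic (exists h', [/\ (size h < size h')%N, (size h' < T)%N & ~ Nash u (mu h')]).
  by apply: (IH h') => //; lia.
exists h; split=> // h' Hlong Hh'.
by apply: NNPP => HN'; apply: Hnone; exists h'.
Qed.

End RepeatedGame.

Theorem mainTheorem20 (R : realType) (n : nat) (A : 'I_n -> finType)
  (u : 'I_n -> prof A -> R)
  (A_nonempty : forall i : 'I_n, (0 < #|A i|)%N) :
  (exists (T : nat) (mu : sprof R A),
      (0 < T)%N /\ SPE u T mu /\ locally_suboptimal u T mu) ->
  exists sigma_hat : mprof R A,
    is_mixed_profile sigma_hat /\
    (forall i : 'I_n, in_IG u i -> best_response u sigma_hat i) /\
    (exists i : 'I_n, ~ best_response u sigma_hat i).
Proof.
move=> [T [mu [_ [Hspe [h [Hh HN]]]]]].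
have [h0 [Hh0 HN0 Htail]] := latest_non_Nash Hh HN.
have Mh0 : is_mixed_profile (mu h0) by apply: Hspe.1.
exists (mu h0); split=> //; split.
  by move=> i Hi; apply: (best_response_before_Nash_tail Hspe Hh0 Htail Hi).
apply: NNPP => Hall; apply: HN0; split=> // i.
by apply: NNPP => Hi; apply: Hall; exists i.
Qed.
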